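(* Consider the system $x_{k+1}=Ax_k+Bu_k$ with constraint sets $\mathcal{X}=\{x\mid C_xx\le c_x\}$, $\mathcal{U}=\{u\mid C_uu\le c_u\}$ (with $0\in\operatorname{int}\mathcal{X}$, $0\in\operatorname{int}\mathcal{U}$) and equilibrium at the origin, controlled by a ReLU network $u_k=\mathcal{N}(x_k;\theta)$ with $L$ hidden layers, i.e. $x_{k+1}=f_{\text{cl}}(x_k)=Ax_k+B\mathcal{N}(x_k;\theta)$. Let $\Gamma_{\text{eq}}=G(0)$, $\mathcal{R}_{\text{eq}}=\{x\mid G(x)=\Gamma_{\text{eq}}\}$, and let $W_{\Gamma_{\text{eq}},L},b_{\Gamma_{\text{eq}},L}$ be as defined in the context. Suppose $W_{L+1}b_{\Gamma_{\text{eq}},L}+b_{L+1}=0$ and every eigenvalue of $A+BW_{L+1}W_{\Gamma_{\text{eq}},L}$ has modulus strictly less than $1$. Let $\mathcal{R}_K$ be the set of initial states $x_0$ for which the linear feedback $u_k=W_{L+1}W_{\Gamma_{\text{eq}},L}x_k$ applied to the system produces a trajectory that satisfies $x_k\in\mathcal{X}$ and $u_k\in\mathcal{U}$ for all $k\ge0$ and converges to the origin. Let $\mathcal{R}_{\text{as}}$ be an admissible control-invariant set for the closed loop with $\mathcal{R}_{\text{as}}\subseteq\mathcal{R}_{\text{eq}}\cap\mathcal{R}_K$. Then the neural network controller is asymptotically stabilizing for all $x\in\mathcal{R}_{\text{as}}$: every closed-loop trajectory starting in $\mathcal{R}_{\text{as}}$ satisfies the constraints and converges asymptotically to the origin.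
   Context: A ReLU network is $\mathcal{N}(x;\theta)=W_{L+1}\xi_L+b_{L+1}$ with $\xi_0=x$, $\xi_l=\max(0,W_l\xi_{l-1}+b_l)$ elementwise for $l=1,\dots,L$, where $W_l\in\mathbb{R}^{n_l\times n_{l-1}}$ ($n_0=n_x$), $b_l\in\mathbb{R}^{n_l}$, $W_{L+1}\in\mathbb{R}^{n_u\times n_L}$, $b_{L+1}\in\mathbb{R}^{n_u}$. The activation pattern of $x$ is $G(x)=(\gamma_1(x),\dots,\gamma_L(x))$ with $\gamma_l(x)\in\{0,1\}^{n_l}$, $\gamma_l(x)^{(i)}=1$ iff $W_l^{(i)}\xi_{l-1}+b_l^{(i)}\ge0$. For a fixed pattern $\Gamma=(\gamma_1,\dots,\gamma_L)$ define $\eta_0=x$, $\eta_l=\gamma_l\odot(W_l\eta_{l-1}+b_l)$ ($\odot$ elementwise product); then $\eta_L=W_{\Gamma,L}x+b_{\Gamma,L}$ for a matrix $W_{\Gamma,L}\in\mathbb{R}^{n_L\times n_x}$ and vector $b_{\Gamma,L}\in\mathbb{R}^{n_L}$ determined by $\Gamma$ and $\theta$. In particular, for $x\in\mathcal{R}_{\text{eq}}$, $\mathcal{N}(x;\theta)=W_{L+1}(W_{\Gamma_{\text{eq}},L}x+b_{\Gamma_{\text{eq}},L})+b_{L+1}$. A set $\mathcal{C}$ is an admissible control-invariant set for the closed loop if $\mathcal{N}(x;\theta)\in\mathcal{U}$ for all $x\in\mathcal{C}$ and $f_{\text{cl}}(\mathcal{C})\subseteq\mathcal{C}$. *)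

From HB Require Import structures.
From mathcomp Require Import all_boot all_order all_algebra.
From mathcomp Require Import all_classical all_reals all_analysis.
From mathcomp Require Import complex.
Set Implicit Arguments. Unset Strict Implicit. Unset Printing Implicit Defensive.
Import Order.TTheory GRing.Theory Num.Theory.
Import numFieldNormedType.Exports.
Local Open Scope ring_scope.
Local Open Scope classical_set_scope.

(* A ReLU network from R^m to R^nu:
   Hidden W b N' : first hidden layer xi = max(0, W x + b), followed by N';
   Out W b      : the affine output layer W xi + b.
   The number of Hidden constructors is the number L of hidden layers. *)
Inductive relu_net (R : Type) : nat -> nat -> Type :=
| Out : forall m nu, 'M[R]_(nu, m) -> 'cV[R]_nu -> relu_net R m nu
| Hidden : forall m k nu, 'M[R]_(k, m) -> 'cV[R]_k -> relu_net R k nu ->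
    relu_net R m nu.

Section Net.
Variable R : realType.

Definition relu n (z : 'cV[R]_n) : 'cV[R]_n := \col_i Num.max 0 (z i 0).

Fixpoint net_eval m nu (N : relu_net R m nu) : 'cV[R]_m -> 'cV[R]_nu :=
  match N with
  | Out _ _ W b => fun x => W *m x + b
  | Hidden _ _ _ W b N' => fun x => net_eval N' (relu (W *m x + b))
  end.

(* activation pattern G(x) = (gamma_1(x), ..., gamma_L(x)), each gamma_l a
   0/1 vector encoded as the list of its entries *)
Fixpoint act_pattern m nu (N : relu_net R m nu) : 'cV[R]_m -> seq (seq bool) :=
  match N with
  | Out _ _ _ _ => fun _ => [::]
  | Hidden _ k _ W b N' => fun x =>
      let z := W *m x + b in
      [seq (0 <= z i 0) | i <- enum 'I_k] :: act_pattern N' (relu z)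
  end.

Definition pat_diag k (g : seq bool) : 'M[R]_k :=
  diag_mx (\row_(i < k) (nth false g i)%:R).

(* For a fixed pattern Gamma:
   pat_lin N Gamma = W_{L+1} W_{Gamma,L},
   pat_off N Gamma = W_{L+1} b_{Gamma,L} + b_{L+1},
   where eta_0 = x, eta_l = gamma_l .* (W_l eta_{l-1} + b_l),
   eta_L = W_{Gamma,L} x + b_{Gamma,L}. *)
Fixpoint pat_lin m nu (N : relu_net R m nu) (G : seq (seq bool)) : 'M[R]_(nu, m) :=
  match N with
  | Out _ _ W _ => W
  | Hidden _ k _ W _ N' =>
      pat_lin N' (behead G) *m (pat_diag k (head [::] G) *m W)
  end.

Fixpoint pat_off m nu (N : relu_net R m nu) (G : seq (seq bool)) : 'cV[R]_nu :=
  match N with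
  | Out _ _ _ b => b
  | Hidden _ k _ _ b N' =>
      pat_lin N' (behead G) *m (pat_diag k (head [::] G) *m b)
      + pat_off N' (behead G)
  end.

Definition polyhedron p n (C : 'M[R]_(p, n)) (c : 'cV[R]_p) : set 'cV[R]_n :=
  [set x | forall i, (C *m x) i 0 <= c i 0].

Definition f_cl nx nu (A : 'M[R]_nx) (B : 'M[R]_(nx, nu))
  (N : relu_net R nx nu) (x : 'cV[R]_nx) : 'cV[R]_nx :=
  A *m x + B *m net_eval N x.

Definition admissible_invariant nx nu (A : 'M[R]_nx) (B : 'M[R]_(nx, nu))
  (N : relu_net R nx nu) (U : set 'cV[R]_nu) (S : set 'cV[R]_nx) : Prop :=
  (forall x, S x -> U (net_eval N x)) /\ (forall x, S x -> S (f_cl A B N x)).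

Definition region_K nx nu (A : 'M[R]_nx) (B : 'M[R]_(nx, nu))
  (K : 'M[R]_(nu, nx)) (X : set 'cV[R]_nx) (U : set 'cV[R]_nu) : set 'cV[R]_nx :=
  [set x0 | let traj := fun k => iter k (fun x => A *m x + B *m (K *m x)) x0 in
     (forall k, X (traj k) /\ U (K *m traj k)) /\ traj @ \oo --> (0 : 'cV[R]_nx)].

Definition complexify n (M : 'M[R]_n) : 'M[R[i]]_n := map_mx (fun r => r%:C)%C M.

End Net.

From HB Require Import structures.
From mathcomp Require Import all_boot all_order all_algebra.
From mathcomp Require Import all_classical all_reals all_analysis.
From mathcomp Require Import complex.
Set Implicit Arguments. Unset Strict Implicit. Unset Printing Implicit Defensive.
Import Order.TTheory GRing.Theory Num.Theory.
Import numFieldNormedType.Exports.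
Local Open Scope ring_scope.
Local Open Scope classical_set_scope.

(* On the region where the activation pattern is the one at the origin, the
   network is the affine map x |-> K x + (W_{L+1} b_{Gamma_eq,L} + b_{L+1}),
   i.e. the linear feedback K x once the offset vanishes.  Hence on R_as the
   closed loop coincides with the linearly controlled system, and since R_as
   is invariant the whole closed-loop trajectory is the trajectory of the
   linear feedback, which satisfies the constraints and converges because it
   starts in R_K. *)

Section IterInvariant.
Variables (T : Type) (S : set T) (f g : T -> T).
Hypothesis fS : forall x, S x -> S (f x).

Lemma iter_invariant k x : S x -> S (iter k f x).
Proof. by move=> Sx; elim: k => //= k IH; apply: fS. Qed.

Lemma eq_in_iter : (forall x, S x -> f x = g x) ->
  forall k x, S x -> iter k f x = iter k g x.
Proof.
move=> fg k x Sx; elim: k => //= k IH.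
by rewrite -IH fg //; apply: iter_invariant.
Qed.

End IterInvariant.

Section PatternLinearization.
Variable R : realType.

Lemma relu_pat_diag k (z : 'cV[R]_k) :
  relu z = pat_diag R k [seq (0 <= z i 0) | i <- enum 'I_k] *m z.
Proof.
apply/matrixP => i j; rewrite /pat_diag mul_diag_mx !mxE.
rewrite (nth_map i) ?size_enum_ord // nth_ord_enum (ord1 j).
by case: leP => _; rewrite ?mul1r ?mul0r.
Qed.

Lemma net_eval_pattern m nu (N : relu_net R m nu) x :
  net_eval N x = pat_lin N (act_pattern N x) *m x + pat_off N (act_pattern N x).
Proof.
elim: N x => [m' nu' W b | m' k nu' W b N' IH] x //=.
by rewrite IH relu_pat_diag /= !mulmxDr !mulmxA addrA.
Qed.

Lemma net_eval_linear_on_pattern m nu (N : relu_net R m nu) G x :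
  pat_off N G = 0 -> act_pattern N x = G -> net_eval N x = pat_lin N G *m x.
Proof. by move=> off0 xG; rewrite net_eval_pattern xG off0 addr0. Qed.

End PatternLinearization.

Theorem lemma2 (R : realType) (nx nu px pu : nat)
  (A : 'M[R]_nx) (B : 'M[R]_(nx, nu))
  (Cx : 'M[R]_(px, nx)) (cx : 'cV[R]_px)
  (Cu : 'M[R]_(pu, nu)) (cu : 'cV[R]_pu)
  (N : relu_net R nx nu) (R_as : set 'cV[R]_nx) :
  interior (polyhedron Cx cx) 0 ->
  interior (polyhedron Cu cu) 0 ->
  let G_eq := act_pattern N 0 in
  let R_eq := [set x | act_pattern N x = G_eq] in
  let K := pat_lin N G_eq in
  pat_off N G_eq = 0 ->
  (forall z : R[i], eigenvalue (complexify (A + B *m K)) z -> `|z| < 1) ->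
  admissible_invariant A B N (polyhedron Cu cu) R_as ->
  R_as `<=` R_eq `&` region_K A B K (polyhedron Cx cx) (polyhedron Cu cu) ->
  forall x0, R_as x0 ->
    (forall k, polyhedron Cx cx (iter k (f_cl A B N) x0) /\
               polyhedron Cu cu (net_eval N (iter k (f_cl A B N) x0))) /\
    (fun k => iter k (f_cl A B N) x0) @ \oo --> (0 : 'cV[R]_nx).
Proof.
move=> _ _ G_eq R_eq K off0 _ [_ inv_as] sub_as x0 x0_as.
have net_K x : R_as x -> net_eval N x = K *m x.
  by move=> /sub_as[xG _]; apply: net_eval_linear_on_pattern.
have traj_lin : forall k, iter k (f_cl A B N) x0 =
    iter k (fun x => A *m x + B *m (K *m x)) x0.
  move=> k; apply: (eq_in_iter inv_as _ k x0_as) => x x_as.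
  by rewrite /f_cl net_K.
have [_ [constr_lin cvg_lin]] := sub_as x0 x0_as.
split; last by rewrite (funext traj_lin).
move=> k.
have xk_as : R_as (iter k (f_cl A B N) x0) := iter_invariant inv_as k x0_as.
by rewrite net_K // traj_lin; apply: constr_lin.
Qed.
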